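(* Let $\alpha\in\mathbb N$ and $n\ge 0$. The inverse of the matrix $$\left(\frac{1}{\alpha\binom{\alpha+i+j}{\alpha}}\right)_{0\le i,j\le n}$$ has integer entries. *)

From mathcomp Require Import all_boot all_order all_algebra.
Set Implicit Arguments. Unset Strict Implicit. Unset Printing Implicit Defensive.
Import Order.TTheory GRing.Theory Num.Theory.
Local Open Scope ring_scope.

Definition binom_recip_mx (alpha n : nat) : 'M[rat]_(n.+1) :=
  \matrix_(i < n.+1, j < n.+1) (alpha%:R * ('C(alpha + i + j, alpha))%:R)^-1.

From mathcomp Require Import all_boot all_order all_algebra.
From mathcomp Require Import zify ring.
Set Implicit Arguments. Unset Strict Implicit. Unset Printing Implicit Defensive.
Import Order.TTheory GRing.Theory Num.Theory.
Local Open Scope ring_scope.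

(* With b = alpha - 1, the entries are Beta integrals:
   1 / (alpha C(alpha + s, alpha)) = b! s! / (b + s + 1)! = int_0^1 x^b (1 - x)^s dx,
   so the matrix A is the Gram matrix of 1, 1 - x, ..., (1 - x)^n for the weight x^b
   on [0, 1]. Orthogonalising yields the shifted Jacobi polynomials
   P_k(y) = sum_m (-1)^m C(k, m) C(k + b + m, m) y^m in y = 1 - x, which have integer
   coefficients and squared norms 1 / (2k + b + 1). Hence C A C^T = diag(1 / (2k + b + 1))
   for the integer matrix C of their coefficients, and A^-1 = C^T diag(2k + b + 1) C.
   Orthogonality is checked algebraically: (C A)_kj is a k-th finite difference in m of
   a rational function, which for j < k is a polynomial of degree < k and for j = k is
   a polynomial of degree k divided by m + b + k + 1. *)

Section FiniteDifference.
Variable R : comNzRingType.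
Implicit Types (f g : nat -> R) (k : nat).

(* [fdiff k f] is (-1)^k times the k-th forward difference of f at 0. *)
Definition fdiff k f : R := \sum_(m < k.+1) (-1) ^+ m * 'C(k, m)%:R * f m.

Lemma fdiff_widen k n f : (k <= n)%N ->
  fdiff k f = \sum_(m < n.+1) (-1) ^+ m * 'C(k, m)%:R * f m.
Proof.
move=> le_kn; rewrite /fdiff.
rewrite (big_ord_widen n.+1 (fun m => (-1) ^+ m * 'C(k, m)%:R * f m)) //.
rewrite big_mkcond; apply: eq_bigr => m _; case: ltnP => // lt_km.
by rewrite bin_small // mulr0 mul0r.
Qed.

Lemma eq_fdiff k f g : f =1 g -> fdiff k f = fdiff k g.
Proof. by move=> eq_fg; apply: eq_bigr => m _; rewrite eq_fg. Qed.

Lemma fdiffD k f g : fdiff k (fun m => f m + g m) = fdiff k f + fdiff k g.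
Proof. by rewrite -big_split; apply: eq_bigr => m _; rewrite mulrDr. Qed.

Lemma fdiffZ k a f : fdiff k (fun m => a * f m) = a * fdiff k f.
Proof. by rewrite mulr_sumr; apply: eq_bigr => m _; rewrite mulrCA. Qed.

Lemma fdiff_sum k I (r : seq I) (F : I -> nat -> R) :
  fdiff k (fun m => \sum_(i <- r) F i m) = \sum_(i <- r) fdiff k (F i).
Proof.
rewrite /fdiff; under eq_bigr do rewrite mulr_sumr.
exact: exchange_big.
Qed.

Lemma fdiffS k f : fdiff k.+1 f = fdiff k f - fdiff k (fun m => f m.+1).
Proof.
rewrite (fdiff_widen f (leqnSn k)) /fdiff big_ord_recl.
rewrite [X in _ = X - _]big_ord_recl !bin0 -addrA -sumrB; congr (_ + _).
by apply: eq_bigr => m _; rewrite binS natrD exprS /=; ring.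
Qed.

Lemma fdiff_exp k i : (i < k)%N -> fdiff k (fun m => m%:R ^+ i) = 0.
Proof.
elim: k i => // k IHk i lt_ik; rewrite fdiffS.
have expS m : m.+1%:R ^+ i = m%:R ^+ i + \sum_(l < i) 'C(i, l)%:R * m%:R ^+ l :> R.
  rewrite -natr1 exprD1n big_ord_recr binn mulr1n addrC.
  by congr (_ + _); apply: eq_bigr => l _; rewrite mulr_natl.
rewrite (eq_fdiff _ expS) fdiffD fdiff_sum big1 ?addr0 ?subrr // => l _.
by rewrite fdiffZ IHk ?mulr0 //; apply: leq_trans (ltn_ord l) _.
Qed.

Lemma fdiff_poly k (p : {poly R}) : (size p <= k)%N -> fdiff k (fun m => p.[m%:R]) = 0.
Proof.
move=> le_pk; rewrite (eq_fdiff _ (fun m => horner_coef p m%:R)) fdiff_sum big1 // => i _.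
by rewrite fdiffZ fdiff_exp ?mulr0 //; apply: leq_trans (ltn_ord i) le_pk.
Qed.

Definition rising_poly a n : {poly R} := \prod_(t < n) ('X + (a + t)%:R%:P).

Lemma size_rising_poly a n : size (rising_poly a n) = n.+1.
Proof.
rewrite /rising_poly; under eq_bigr do rewrite -[_%:R]opprK polyCN.
by rewrite size_prod_XsubC /index_enum unlock -enumT -cardT card_ord.
Qed.

Lemma fact_rising_poly m a n :
  (m + a + n)`!%:R = (m + a)`!%:R * (rising_poly a.+1 n).[m%:R] :> R.
Proof.
elim: n => [|n IHn]; first by rewrite addn0 /rising_poly big_ord0 hornerC mulr1.
rewrite /rising_poly big_ord_recr hornerM -/(rising_poly _ _) mulrA -IHn.
by rewrite addnS factS natrM mulrC !hornerE -natrD /= addnA addnS addSn.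
Qed.

Lemma rising_poly_reflect a n (x : R) :
  (rising_poly a n).[- (x + (a + n)%:R)] = (-1) ^+ n * (rising_poly 1 n).[x].
Proof.
rewrite /rising_poly !horner_prod (reindex_inj rev_ord_inj).
rewrite -[X in (-1) ^+ X](card_ord n) -prodrN.
apply: eq_bigr => t _ /=.
have -> : (a + n = a + (n - t.+1) + (1 + t))%N by have := ltn_ord t; lia.
by rewrite !hornerE !natrD; ring.
Qed.

End FiniteDifference.

Section FiniteDifferenceNumField.
Variable R : numFieldType.

Lemma natr_fact_neq0 n : n`!%:R != 0 :> R.
Proof. by rewrite pnatr_eq0 -lt0n fact_gt0. Qed.

Lemma fdiff_recip k c :
  fdiff k (fun m => (m + c.+1)%:R^-1 : R) = (k`! * c`!)%:R / (k + c.+1)`!%:R.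
Proof.
elim: k c => [|k IHk] c.
  rewrite /fdiff big_ord1 expr0 bin0 !mul1r add0n fact0 mul1n factS natrM.
  by field; rewrite natr_fact_neq0 nat1r pnatr_eq0.
rewrite fdiffS (eq_fdiff _ (fun m => congr1 (fun n => n%:R^-1) (addSnnS m c.+1))) !IHk.
have -> : (k + c.+2 = (k + c.+1).+1)%N by rewrite addnS.
have -> : (k.+1 + c.+1 = (k + c.+1).+1)%N by rewrite addSn.
rewrite (factS k) (factS c) (factS (k + c.+1)) !natrM.
by field; rewrite natr_fact_neq0 nat1r -natrD nat1r pnatr_eq0.
Qed.

Lemma fdiff_poly_recip k c (p : {poly R}) : (size p <= k.+1)%N ->
  fdiff k (fun m => p.[m%:R] / (m + c.+1)%:R) =
  p.[- c.+1%:R] * ((k`! * c`!)%:R / (k + c.+1)`!%:R).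
Proof.
move=> le_pk; set x : R := - c.+1%:R; set q := p %/ ('X - x%:P).
have le_qk : (size q <= k)%N.
  by rewrite size_divp ?polyXsubC_eq0 // size_XsubC leq_subLR.
have partial_fraction m : p.[m%:R] / (m + c.+1)%:R = q.[m%:R] + p.[x] * (m + c.+1)%:R^-1.
  have m_c_neq0 : (m + c.+1)%:R != 0 :> R by rewrite pnatr_eq0 addnS.
  rewrite {1}(divp_eq p ('X - x%:P)) modp_XsubC !hornerE /x natrD opprK.
  by rewrite -natrD mulrDl mulfK.
by rewrite (eq_fdiff _ partial_fraction) fdiffD fdiff_poly // add0r fdiffZ fdiff_recip.
Qed.

End FiniteDifferenceNumField.

Section BetaMoments.
Variable R : numFieldType.
Implicit Types b k j m s : nat.

Lemma natr_bin_fact n m : (m <= n)%N ->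
  'C(n, m)%:R = n`!%:R / (m`!%:R * (n - m)`!%:R) :> R.
Proof.
move=> le_mn; rewrite -(bin_fact le_mn) !natrM mulfK //.
by rewrite mulf_neq0 ?natr_fact_neq0.
Qed.

Definition beta_moment b s : R := (b.+1%:R * 'C(b.+1 + s, b.+1)%:R)^-1.

Lemma beta_momentE b s : beta_moment b s = b`!%:R * s`!%:R / (b + s).+1`!%:R.
Proof.
rewrite /beta_moment natr_bin_fact ?leq_addr // addKn addSn.
rewrite (factS b) [(b.+1 * _)%:R]natrM.
by field; rewrite !natr_fact_neq0 nat1r pnatr_eq0.
Qed.

Lemma binom_beta_lower b k j m : (j < k)%N ->
  'C(k + b + m, m)%:R * beta_moment b (m + j) =
  b`!%:R / (k + b)`!%:R *
  (rising_poly R 1 j * rising_poly R (b + j).+2 (k - j.+1)).[m%:R].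
Proof.
move=> lt_jk; rewrite beta_momentE hornerM natr_bin_fact ?leq_addl // addnK.
have := fact_rising_poly R m 0 j; rewrite !addn0 => ->.
have := fact_rising_poly R m (b + j).+1 (k - j.+1).
have -> : (m + (b + j).+1 + (k - j.+1) = k + b + m)%N by lia.
have -> : (m + (b + j).+1 = (b + (m + j)).+1)%N by lia.
by move=> ->; field; rewrite !natr_fact_neq0.
Qed.

Lemma binom_beta_diag b k m :
  'C(k + b + m, m)%:R * beta_moment b (m + k) =
  b`!%:R / (k + b)`!%:R * ((rising_poly R 1 k).[m%:R] / (m + (b + k).+1)%:R).
Proof.
rewrite beta_momentE natr_bin_fact ?leq_addl // addnK.
have := fact_rising_poly R m 0 k; rewrite !addn0 => ->.
have -> : (b + (m + k)).+1 = (k + b + m).+1 by congr _.+1; lia.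
rewrite factS [((k + b + m).+1 * _)%:R]natrM.
have -> : (m + (b + k).+1 = (k + b + m).+1)%N by lia.
by field; rewrite !natr_fact_neq0 -!natrD nat1r pnatr_eq0.
Qed.

Lemma fdiff_binom_beta_lower b k j : (j < k)%N ->
  fdiff k (fun m => 'C(k + b + m, m)%:R * beta_moment b (m + j)) = 0.
Proof.
move=> lt_jk; rewrite (eq_fdiff _ (fun m => binom_beta_lower b m lt_jk)) fdiffZ.
rewrite fdiff_poly ?mulr0 //; apply: leq_trans (size_polyMleq _ _) _.
by rewrite !size_rising_poly; lia.
Qed.

Lemma fdiff_binom_beta_diag b k :
  fdiff k (fun m => 'C(k + b + m, m)%:R * beta_moment b (m + k)) =
  (-1) ^+ k * (k`! * (b + k)`!)%:R / (k + (b + k).+1)`!%:R.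
Proof.
rewrite (eq_fdiff _ (binom_beta_diag b k)) fdiffZ fdiff_poly_recip ?size_rising_poly //.
have -> : - (b + k).+1%:R = - (b%:R + (1 + k)%:R) :> R by rewrite -natrD addnCA.
rewrite rising_poly_reflect (addnC k b).
have := fact_rising_poly R b 0 k; rewrite !addn0 => fact_bk.
have -> : (rising_poly R 1 k).[b%:R] = (b + k)`!%:R / b`!%:R.
  by rewrite fact_bk [_ * _ / _]mulrC mulKf ?natr_fact_neq0.
by field; rewrite !natr_fact_neq0.
Qed.

End BetaMoments.

Lemma invmx_congruence (R : comUnitRingType) m (A P D : 'M[R]_m) :
  P *m A *m P^T *m D = 1%:M -> A \in unitmx /\ invmx A = P^T *m D *m P.
Proof.
move=> PAPtD; have APtDP : A *m (P^T *m D *m P) = 1%:M.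
  by rewrite !mulmxA; apply: mulmx1C; rewrite !mulmxA.
split; first by case: (mulmx1_unit APtDP).
by rewrite -[invmx A]mulmx1 -APtDP mulKmx // (mulmx1_unit APtDP).1.
Qed.

Section JacobiGram.
Variables b n : nat.
Local Notation N := n.+1.
Local Notation A := (binom_recip_mx b.+1 n).

Definition jacobi_mx : 'M[int]_N :=
  \matrix_(k, m) ((-1) ^+ m * ('C(k, m) * 'C(k + b + m, m))%:R).

Local Notation C := (map_mx intr jacobi_mx : 'M[rat]_N).

Lemma jacobi_mxE (k m : 'I_N) : C k m = (-1) ^+ m * 'C(k, m)%:R * 'C(k + b + m, m)%:R.
Proof. by rewrite !mxE rmorphM rmorphXn rmorphN1 rmorph_nat natrM mulrA. Qed.

Lemma jacobi_mx_upper (k m : 'I_N) : (k < m)%N -> C k m = 0.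
Proof. by move=> lt_km; rewrite jacobi_mxE bin_small // mulr0 mul0r. Qed.

Lemma binom_recip_mx_sym : A^T = A.
Proof. by apply/matrixP => i j; rewrite !mxE addnAC. Qed.

Lemma jacobi_mulmxE (k j : 'I_N) :
  (C *m A) k j = fdiff k (fun m => 'C(k + b + m, m)%:R * beta_moment rat b (m + j)).
Proof.
rewrite mxE (fdiff_widen _ (leq_ord k)); apply: eq_bigr => m _.
by rewrite jacobi_mxE mxE /beta_moment addnA mulrA.
Qed.

Lemma jacobi_gram_lower (k l : 'I_N) : (l < k)%N -> (C *m A *m C^T) k l = 0.
Proof.
move=> lt_lk; rewrite mxE big1 // => j _; rewrite [_^T _ _]mxE.
case: (ltnP j k) => [lt_jk | le_kj].
  by rewrite jacobi_mulmxE fdiff_binom_beta_lower // mul0r.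
by rewrite jacobi_mx_upper ?mulr0 //; apply: leq_trans lt_lk le_kj.
Qed.

Lemma jacobi_gram_sym : (C *m A *m C^T)^T = C *m A *m C^T.
Proof. by rewrite !trmx_mul trmxK binom_recip_mx_sym mulmxA. Qed.

Lemma jacobi_gram_diag (k : 'I_N) : (C *m A *m C^T) k k = (k.*2 + b).+1%:R^-1.
Proof.
rewrite mxE (bigD1 k) //= big1 ?addr0 => [|j neq_jk]; last first.
  rewrite [_^T _ _]mxE; case: (ltngtP j k) => [lt_jk | lt_kj | eq_jk].
  - by rewrite jacobi_mulmxE fdiff_binom_beta_lower // mul0r.
  - by rewrite jacobi_mx_upper ?mulr0.
  - by move: neq_jk; rewrite (val_inj eq_jk) eqxx.
rewrite [_^T _ _]mxE jacobi_mulmxE fdiff_binom_beta_diag jacobi_mxE binn mulr1.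
rewrite mulrC -!mulrA [_ * ((-1) ^+ k * _)]mulrCA signrMK.
rewrite natr_bin_fact ?leq_addl // addnK (addnC k b).
have -> : (k + (b + k).+1 = (b + k + k).+1)%N by rewrite addnS addnC.
have -> : (k.*2 + b = b + k + k)%N by rewrite -addnn addnC addnA.
rewrite factS [((b + k + k).+1 * _)%:R]natrM.
by field; rewrite !natr_fact_neq0 -!natrD nat1r pnatr_eq0.
Qed.

Definition jacobi_weights : 'rV[int]_N := \row_k (k.*2 + b).+1%:R.

Lemma jacobi_gram_weights : C *m A *m C^T *m diag_mx (map_mx intr jacobi_weights) = 1%:M.
Proof.
apply/matrixP => k l; rewrite mul_mx_diag mxE [1%:M k l]mxE.
case: (ltngtP k l) => [lt_kl | lt_lk | /val_inj <-].
- rewrite -jacobi_gram_sym mxE jacobi_gram_lower // mul0r.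
  by rewrite -val_eqE (ltn_eqF lt_kl).
- by rewrite jacobi_gram_lower // mul0r -val_eqE (gtn_eqF lt_lk).
- by rewrite jacobi_gram_diag !mxE rmorph_nat eqxx mulVf // pnatr_eq0.
Qed.

Lemma invmx_binom_recip_mx :
  A \in unitmx /\
  invmx A = map_mx intr (jacobi_mx^T *m diag_mx jacobi_weights *m jacobi_mx).
Proof.
rewrite !map_mxM -map_trmx map_diag_mx.
exact: invmx_congruence jacobi_gram_weights.
Qed.

End JacobiGram.

Theorem theorem4p2 (alpha n : nat) (halpha : (0 < alpha)%N) :
  binom_recip_mx alpha n \in unitmx /\
  forall i j : 'I_n.+1, exists z : int, (invmx (binom_recip_mx alpha n)) i j = z%:~R.
Proof.
case: alpha halpha => // b _; have [unitA ->] := invmx_binom_recip_mx b n.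
split=> // i j.
exists (((jacobi_mx b n)^T *m diag_mx (jacobi_weights b n) *m jacobi_mx b n) i j).
by rewrite mxE.
Qed.
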